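(* Fix a positive integer $k$ and let $a_n=\left\lceil \frac{2^{n+k-1}}{2^k+1}\right\rceil$ for $n\ge 1$. Then the sequence $(\Gamma(a_n,a_{n+1}))_{n\ge 1}$ is $$\underbrace{1,\ldots,1}_{k},\underbrace{2,\ldots,2}_{k},\underbrace{1,\ldots,1}_{k},\underbrace{2,\ldots,2}_{k},\ldots,$$ i.e., it consists of alternating blocks of $k$ ones and $k$ twos, starting with a block of ones.
   Context: For relatively prime positive integers $p,q$, exactly one of the equations $px+qy=\frac{(p-1)(q-1)}{2}$ (Equation 1) and $px+qy+1=\frac{(p-1)(q-1)}{2}$ (Equation 2) has a solution in nonnegative integers $(x,y)$. For positive integers $a,b$ with $d=\gcd(a,b)$, $\Gamma(a,b)=1$ if Equation 1 with $(p,q)=(a/d,b/d)$ has a nonnegative integer solution, and $\Gamma(a,b)=2$ otherwise. *)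

From mathcomp Require Import all_boot.
From mathcomp Require Import boolp.
Set Implicit Arguments. Unset Strict Implicit. Unset Printing Implicit Defensive.

(* Equation 1 for (p,q): p x + q y = (p-1)(q-1)/2 has a solution in nonnegative
   integers. For coprime p,q, (p-1)(q-1) is even, so nat division by 2 is exact. *)
Definition eq1_solvable (p q : nat) : Prop :=
  exists x y : nat, p * x + q * y = ((p - 1) * (q - 1)) %/ 2.

Definition Gamma (a b : nat) : nat :=
  let d := gcdn a b in
  if `[< eq1_solvable (a %/ d) (b %/ d) >] then 1 else 2.

Definition ceil_div (m d : nat) : nat := (m + d.-1) %/ d.
Definition a_seq (k n : nat) : nat := ceil_div (2 ^ (n + k - 1)) (2 ^ k + 1).

(* With X = 2^k, n - 1 = b k + i and 0 <= i < k, the numerator of a_n is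
   X^(b+1) 2^i, and X^(b+1) is congruent to X or to 1 modulo X + 1 according
   as b is even or odd.  Hence a_n = c and a_(n+1) = 2c in the first case,
   where Gamma = 1 trivially, and a_n = c + 1, a_(n+1) = 2c + 1 in the second,
   where a_n x + a_(n+1) y = c^2 has no solution because it would force
   y = -1 modulo c + 1. *)

From mathcomp Require Import all_boot.
From mathcomp Require Import boolp zify.

Lemma ceil_divMDl d q r : 0 < d -> ceil_div (q * d + r) d = q + ceil_div r d.
Proof. by move=> d_gt0; rewrite /ceil_div -addnA divnMDl. Qed.

Lemma ceil_div_small r d : 0 < r <= d -> ceil_div r d = 1.
Proof.
case/andP=> r_gt0 le_rd; rewrite /ceil_div.
have -> : r + d.-1 = 1 * d + r.-1 by lia.
by rewrite divnMDl ?divn_small //; lia.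
Qed.

Lemma ceil_div_mul_pred X P : P <= X -> ceil_div (X * P) X.+1 = P.
Proof.
move=> le_PX; rewrite /ceil_div /=.
have -> : X * P + X = P * X.+1 + (X - P) by rewrite mulnS mulnC; lia.
by rewrite divnMDl // divn_small ?addn0 //; lia.
Qed.

Lemma expn_modS X e : 0 < X -> X ^ e %% X.+1 = if odd e then X else 1.
Proof.
move=> X_gt0; elim: e => [|e IHe]; first by rewrite modn_small.
rewrite expnS -modnMmr IHe /=; case: (odd e) => /=.
- have -> : X * X = X.-1 * X.+1 + 1 by case: X X_gt0 {IHe} => // Y _; nia.
  by rewrite modnMDl modn_small.
- by rewrite muln1 modn_small.
Qed.

Lemma ceil_div_expn X e P : 0 < P <= X ->
  ceil_div (X ^ e * P) X.+1 = X ^ e %/ X.+1 * P + (if odd e then P else 1).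
Proof.
case/andP=> P_gt0 le_PX.
rewrite {1}(divn_eq (X ^ e) X.+1) expn_modS; last by lia.
rewrite mulnDl mulnAC ceil_divMDl //; case: (odd e).
- by rewrite ceil_div_mul_pred.
- by rewrite mul1n ceil_div_small //; lia.
Qed.

Lemma Gamma_mulr c m : 0 < c -> Gamma c (c * m) = 1.
Proof.
move=> c_gt0; rewrite /Gamma gcdnMr divnn c_gt0 mulKn //.
by rewrite asboolT //; exists 0, 0; rewrite !muln0.
Qed.

Lemma coprime_S_doubleS m : coprime m.+1 m.*2.+1.
Proof.
rewrite /coprime -addnn -addSn addnC gcdnDr.
by rewrite gcdnC -/(coprime _ _) coprimenS.
Qed.

Lemma eq1_unsolvable_S_doubleS m : 0 < m -> ~ eq1_solvable m.+1 m.*2.+1.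
Proof.
move=> m_gt0 [x [y]]; rewrite !subn1 /= -muln2 mulnA mulnK // => Exy.
have Ey : (x + y.*2) * m.+1 = y.+1 + m.-1 * m.+1 by rewrite -muln2; nia.
have : m.+1 %| y.+1 + m.-1 * m.+1 by rewrite -Ey dvdn_mull.
by rewrite dvdn_addl ?dvdn_mull // => /dvdn_leq le_my; nia.
Qed.

Lemma Gamma_S_doubleS m : 0 < m -> Gamma m.+1 m.*2.+1 = 2.
Proof.
move=> m_gt0; rewrite /Gamma (eqP (coprime_S_doubleS m)) !divn1.
by rewrite asboolF //; apply: eq1_unsolvable_S_doubleS.
Qed.

Theorem theorem1p3 (k : nat) (hk : 0 < k) :
  forall n : nat, 1 <= n ->
    Gamma (a_seq k n) (a_seq k n.+1) = (if odd ((n - 1) %/ k) then 2 else 1).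
Proof.
move=> n n_gt0.
set b := (n - 1) %/ k; set i := (n - 1) %% k.
have i_lt_k : i < k by rewrite ltn_mod.
have Enb : n - 1 = b * k + i by rewrite /b /i -divn_eq.
set X := 2 ^ k; set P := 2 ^ i.
have P_gt0 : 0 < P by rewrite expn_gt0.
have le_P2X : P.*2 <= X by rewrite -mul2n -expnS leq_exp2l.
have Ean : 2 ^ (n + k - 1) = X ^ b.+1 * P.
  by rewrite -expnM -expnD; congr (2 ^ _); lia.
have Ean1 : 2 ^ (n.+1 + k - 1) = X ^ b.+1 * P.*2.
  by rewrite -mul2n mulnCA -Ean -expnS; congr (2 ^ _); lia.
rewrite /a_seq Ean Ean1 addn1 -/X !ceil_div_expn ?double_gt0 ?P_gt0 ?le_P2X //; last by lia.
set c := X ^ b.+1 %/ X.+1; rewrite [odd b.+1]/=; case b_odd: (odd b) => /=.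
- have c_gt0 : 0 < c.
    have le_X_Xb : X <= X ^ b.
      by rewrite -{1}(expn1 X); apply: leq_pexp2l; [lia | exact: odd_gt0].
    by rewrite divn_gt0 // expnS; nia.
  by rewrite -doubleMr !addn1 Gamma_S_doubleS // muln_gt0 c_gt0.
- by rewrite -!mulSnr -doubleMr -muln2 Gamma_mulr // muln_gt0.
Qed.
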